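(* Let $S,T,V$ be ordered trees and let $f\colon T\to S$ and $g\colon V\to T$ be rigid surjections. Then $f\circ g\colon V\to S$ is a rigid surjection. Moreover, if $d\colon S\to T$ is the injection of $f$ and $e\colon T\to V$ is the injection of $g$, then $e\circ d$ is the injection of $f\circ g$.
   Context: A tree is a finite, non-empty partially ordered set $(T,\sqsubseteq_T)$ with a smallest element (the root) such that the set of predecessors of each element is linearly ordered; each node counts as its own predecessor and successor. For $v,w\in T$, $v\wedge_T w$ is the $\sqsubseteq_T$-largest common predecessor of $v$ and $w$. A tree is ordered if the set of immediate successors of each node carries a fixed linear order; this induces the lexicographic linear order $\leq_T$ on $T$: $v\leq_T w$ if $v\sqsubseteq_T w$, and for $\sqsubseteq_T$-incomparable $v,w$, $v\leq_T w$ iff the immediate successor of $v\wedge_T w$ below $v$ precedes the one below $w$. A morphism $e\colon S\to T$ of ordered trees satisfies $e(v\wedge_S w)=e(v)\wedge_T e(w)$, is monotone from $\leq_S$ to $\leq_T$, and maps root to root. A function $f\colon T\to S$ is a rigid surjection if there is a morphism $e\colon S\to T$ with $f\circ e={\rm id}_S$ and $e(f(w))\sqsubseteq_T w$ for all $w\in T$; such $e$ is unique and is called the injection of $f$. *)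

From mathcomp Require Import all_boot.
Set Implicit Arguments. Unset Strict Implicit. Unset Printing Implicit Defensive.

(* Finite ordered trees.  [ot_le] is the tree order (⊑); [ot_sib] is the
   fixed linear order on the set of immediate successors of each node
   (it only relates siblings, and is a linear order on each sibling set). *)

Section TreeNotions.
Variables (T : finType) (le : rel T).

Definition is_root (r : T) : Prop := forall v, le r v.

Definition strict (v w : T) : Prop := le v w /\ v <> w.

Definition imm_succ (v w : T) : Prop :=
  strict v w /\ ~ (exists u, strict v u /\ strict u w).

Definition siblings (c d : T) : Prop := exists p, imm_succ p c /\ imm_succ p d.

Definition is_meet (v w m : T) : Prop :=
  le m v /\ le m w /\ forall u, le u v -> le u w -> le u m.
End TreeNotions.

Record ordered_tree := OrderedTree {
  ot_car :> finType;
  ot_le : rel ot_car;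
  ot_sib : rel ot_car;
  ot_refl : forall v, ot_le v v;
  ot_antisym : forall v w, ot_le v w -> ot_le w v -> v = w;
  ot_trans : forall u v w, ot_le u v -> ot_le v w -> ot_le u w;
  ot_has_root : exists r, is_root ot_le r;
  ot_pred_linear : forall v a b, ot_le a v -> ot_le b v -> ot_le a b \/ ot_le b a;
  ot_sib_sib : forall c d, ot_sib c d -> siblings ot_le c d;
  ot_sib_refl : forall p c, imm_succ ot_le p c -> ot_sib c c;
  ot_sib_antisym : forall c d, ot_sib c d -> ot_sib d c -> c = d;
  ot_sib_trans : forall c d e, ot_sib c d -> ot_sib d e -> ot_sib c e;
  ot_sib_total : forall p c d, imm_succ ot_le p c -> imm_succ ot_le p d ->
                   ot_sib c d \/ ot_sib d c
}.

Section Ordered.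
Variable T : ordered_tree.

Definition tle (v w : T) : Prop := ot_le v w.
Definition tmeet (v w m : T) : Prop := is_meet (@ot_le T) v w m.
Definition troot (r : T) : Prop := is_root (@ot_le T) r.

Definition lex (v w : T) : Prop :=
  ot_le v w \/
  (~ ot_le v w /\ ~ ot_le w v /\
   exists m c d, tmeet v w m /\ imm_succ (@ot_le T) m c /\
                 imm_succ (@ot_le T) m d /\ ot_le c v /\ ot_le d w /\ ot_sib c d).
End Ordered.

Definition tree_morphism (S T : ordered_tree) (e : S -> T) : Prop :=
  (forall v w m, tmeet v w m -> tmeet (e v) (e w) (e m)) /\
  (forall v w, lex v w -> lex (e v) (e w)) /\
  (forall r, troot r -> troot (e r)).

Definition injection_of (T S : ordered_tree) (f : T -> S) (e : S -> T) : Prop :=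
  tree_morphism e /\ (forall s, f (e s) = s) /\ (forall w, tle (e (f w)) w).

Definition rigid_surjection (T S : ordered_tree) (f : T -> S) : Prop :=
  exists e : S -> T, injection_of f e.

From mathcomp Require Import all_boot.

(* Composites of rigid surjections are rigid surjections because everything
   composes: morphisms compose, the sections compose, and the inequality
   e (d (f (g v))) ⊑ e (g v) ⊑ v holds since morphisms are ⊑-monotone. *)

Lemma tree_morphism_comp (S T V : ordered_tree) (d : S -> T) (e : T -> V) :
  tree_morphism d -> tree_morphism e -> tree_morphism (fun s => e (d s)).
Proof. by move=> [d1 [d2 d3]] [e1 [e2 e3]]; split; [|split]; auto. Qed.

(* [a ⊑ b] iff [a] is the meet of [a] and [b], which a morphism preserves. *)
Lemma tree_morphism_mono (S T : ordered_tree) (e : S -> T) (a b : S) :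
  tree_morphism e -> tle a b -> tle (e a) (e b).
Proof.
move=> [e_meet _] le_ab.
have meet_ab : tmeet a b a by split; [exact: ot_refl | split].
by have [_ []] := e_meet _ _ _ meet_ab.
Qed.

Lemma injection_of_comp (S T V : ordered_tree) (f : T -> S) (g : V -> T)
    (d : S -> T) (e : T -> V) :
  injection_of f d -> injection_of g e ->
  injection_of (fun v => f (g v)) (fun s => e (d s)).
Proof.
move=> [d_morph [dK d_le]] [e_morph [eK e_le]]; split.
  exact: tree_morphism_comp.
split=> [s | v]; first by rewrite eK dK.
apply: (@ot_trans V _ (e (g v))); last exact: e_le.
exact: tree_morphism_mono (d_le (g v)).
Qed.

Theorem lemma2p2 (S T V : ordered_tree) (f : T -> S) (g : V -> T) :
  rigid_surjection f -> rigid_surjection g ->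
  rigid_surjection (fun v => f (g v)) /\
  (forall (d : S -> T) (e : T -> V), injection_of f d -> injection_of g e ->
     injection_of (fun v => f (g v)) (fun s => e (d s))).
Proof.
move=> [d inj_d] [e inj_e]; split; last exact: injection_of_comp.
by exists (fun s => e (d s)); exact: injection_of_comp.
Qed.
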